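(* Let $n\ge 3$, $s,t\in\{-1,1\}^{n}$ with $s\neq t$ and $\sharp_{n}(s)=\sharp_{n}(t)$, and let $(\beta_{1},\beta_{2})\in(0,1)^2$ with $\beta_{1}+\beta_{2}>1$ satisfy \[ \sum_{k=1}^{n}\Big(s_{k}\beta_{1}^{\sharp_{k}(s)}\beta_{2}^{\tilde\sharp_{k}(s)}-t_{k}\beta_{1}^{\sharp_{k}(t)}\beta_{2}^{\tilde\sharp_{k}(t)}\Big)=0 .\] Then there is a $p\in(0,1)$ such that $\widehat{SD}^{p}_{\beta_{1},\beta_{2}}<1$ and $SD^{p}_{\beta_{1},\beta_{2}}>1$.
   Context: $SD^{p}_{\beta_{1},\beta_{2}}=\frac{-p\log p-(1-p)\log(1-p)}{-p\log\beta_{1}-(1-p)\log\beta_{2}}$. For $r\in\{-1,1\}^{n}$ and $1\le k\le n$, $\sharp_{k}(r)$ is the number of entries of $(r_1,\dots,r_k)$ equal to $1$ and $\tilde\sharp_{k}(r)=k-\sharp_{k}(r)$. Put $w_r=p^{\sharp_{n}(r)}(1-p)^{\tilde\sharp_{n}(r)}$, $p_{s,t}=w_s+w_t$, $\rho_r=\beta_{1}^{\sharp_{n}(r)}\beta_{2}^{\tilde\sharp_{n}(r)}$, and \[ \widehat{SD}^{p}_{\beta_{1},\beta_{2}}=\frac{-\sum_{r\in\{-1,1\}^{n}\setminus\{s,t\}}w_r\log w_r-p_{s,t}\log p_{s,t}}{-\sum_{r\in\{-1,1\}^{n}\setminus\{s,t\}}w_r\log \rho_r-p_{s,t}\log\rho_s}.\]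 *)

From mathcomp Require Import all_boot all_order all_algebra.
From mathcomp Require Import all_classical all_reals all_analysis.
Set Implicit Arguments. Unset Strict Implicit. Unset Printing Implicit Defensive.
Import Order.TTheory GRing.Theory Num.Theory.
Local Open Scope ring_scope.

(* A sign vector r in {-1,1}^n is encoded as r : {ffun 'I_n -> bool},
   with true <-> +1 and false <-> -1.  Entry r_k (k = 1..n) is r (k-1). *)
Definition sgnb {R : ringType} (b : bool) : R := if b then 1 else -1.

Definition cnt {n : nat} (r : {ffun 'I_n -> bool}) (k : nat) : nat :=
  #|[set i : 'I_n | (i < k)%N && r i]|.

Definition cntc {n : nat} (r : {ffun 'I_n -> bool}) (k : nat) : nat :=
  (k - cnt r k)%N.

Definition SD {R : realType} (p b1 b2 : R) : R :=
  (- p * ln p - (1 - p) * ln (1 - p)) / (- p * ln b1 - (1 - p) * ln b2).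

Definition wt {R : realType} {n : nat} (p : R) (r : {ffun 'I_n -> bool}) : R :=
  p ^+ cnt r n * (1 - p) ^+ cntc r n.

Definition rho {R : realType} {n : nat} (b1 b2 : R) (r : {ffun 'I_n -> bool}) : R :=
  b1 ^+ cnt r n * b2 ^+ cntc r n.

Definition SDhat {R : realType} {n : nat} (s t : {ffun 'I_n -> bool}) (p b1 b2 : R) : R :=
  let pst := wt p s + wt p t in
  (- (\sum_(r : {ffun 'I_n -> bool} | (r != s) && (r != t)) wt p r * ln (wt p r))
     - pst * ln pst)
  / (- (\sum_(r : {ffun 'I_n -> bool} | (r != s) && (r != t)) wt p r * ln (rho b1 b2 r))
     - pst * ln (rho b1 b2 s)).

From mathcomp Require Import all_boot all_order all_algebra.
From mathcomp Require Import all_classical all_reals all_analysis.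
From mathcomp Require Import ring lra.
Import Order.TTheory GRing.Theory Num.Theory.
Import numFieldNormedType.Exports.

Set Implicit Arguments.
Unset Strict Implicit.
Unset Printing Implicit Defensive.
Local Open Scope ring_scope.

(* Since s and t have the same number of ones, w_s = w_t and rho_s = rho_t, and
   the first moments of the binomial law give
     SDhat = (n H(p) - 2 w_s(p) ln 2) / (n C(p)),    SD = H(p) / C(p),
   with H the binary entropy and C(p) = - p ln b1 - (1 - p) ln b2 > 0.  Both
   inequalities thus follow from 0 < n (H - C)(p) < 2 w_s(p) ln 2.  The gap H - C
   equals ln (b1 + b2) > 0 at p = b1 / (b1 + b2) and tends to ln b2 < 0 as p -> 0,
   so the intermediate value theorem applied to n (H - C) - w_s ln 2 yields p. *)

Lemma sum_except2 (T : finType) (V : zmodType) (s t : T) (g : T -> V) : s != t ->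
  \sum_(r | (r != s) && (r != t)) g r = \sum_r g r - g s - g t.
Proof.
move=> st; rewrite [in RHS](bigD1 s) //= [in RHS](bigD1 t) 1?eq_sym //=.
by rewrite [g s + _]addrC addrK [g t + _]addrC addrK.
Qed.

Lemma IVT_between (R : realType) (f g : R -> R) (a b : R) : a <= b ->
  {in `[a, b], continuous f} -> {in `[a, b], continuous g} ->
  {in `[a, b], forall x, 0 < g x} -> f a < 0 -> 0 < f b ->
  exists2 c, c \in `[a, b] & 0 < f c < g c.
Proof.
move=> ab cf cg g_gt0 fa fb.
have a_in : a \in `[a, b] by rewrite in_itv /= lexx ab.
have b_in : b \in `[a, b] by rewrite in_itv /= lexx ab andbT.
(* aim at the level [f = g / 2], which lies strictly between 0 and g *)
pose h x := f x - g x / 2.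
have [hb|hb] := leP (h b) 0.
  by exists b => //; rewrite fb /=; have := g_gt0 _ b_in; rewrite /h in hb; lra.
have ha : h a < 0 by have := g_gt0 _ a_in; rewrite /h; lra.
have ch : {within `[a, b], continuous h}%classic.
  apply: continuous_in_subspaceT => x /set_mem x_in.
  by apply: cvgB; [exact: cf | apply: cvgM; [exact: cg | exact: cvg_cst]].
have h0 : Num.min (h a) (h b) <= 0 <= Num.max (h a) (h b).
  by rewrite ge_min le_max (ltW ha) (ltW hb) !orbT.
have [c c_in hc] := IVT ab ch h0.
by exists c => //; have := g_gt0 _ c_in; rewrite /h in hc; lra.
Qed.

Section Weight.
Context {R : comPzRingType} {n : nat}.
Implicit Types (x y : R) (r : {ffun 'I_n -> bool}).

Definition weight x y r : R := \prod_(i < n) (if r i then x else y).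

Lemma cnt_card r : cnt r n = #|[set i | r i]|.
Proof. by apply: eq_card => i; rewrite !inE ltn_ord. Qed.

Lemma cntc_card r : cntc r n = #|[set i | ~~ r i]|.
Proof.
rewrite /cntc cnt_card -[in X in (X - _)%N](card_ord n) -(cardsC [set i | r i]) addKn.
by apply: eq_card => i; rewrite !inE.
Qed.

Lemma weightE x y r : weight x y r = x ^+ cnt r n * y ^+ cntc r n.
Proof.
rewrite /weight (bigID (fun i => r i)) /= cnt_card cntc_card.
rewrite (eq_bigr (fun _ => x)) => [|i ->//].
rewrite [X in _ * X](eq_bigr (fun _ => y)) => [|i /negbTE ->//].
by rewrite !prodr_const; congr (_ ^+ _ * _ ^+ _); apply: eq_card => i; rewrite !inE.
Qed.

Lemma sum_weight_count x y b :
  \sum_r weight x y r * #|[set i | r i == b]|%:R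
  = n%:R * (if b then x else y) * (x + y) ^+ n.-1.
Proof.
pose sel (c : bool) := if c then x else y.
have count_sum r : #|[set i | r i == b]|%:R = \sum_(i < n) ((r i == b)%:R : R).
  rewrite -sum1_card natr_sum big_mkcond /=.
  by apply: eq_bigr => i _; rewrite inE; case: (r i == b).
under eq_bigr => r _ do rewrite count_sum mulr_sumr.
rewrite exchange_big /= -mulrA mulr_natl -[in X in _ *+ X](card_ord n) -sumr_const.
apply: eq_big => // i _.
(* the indicator of [r i == b] is absorbed into the i-th factor of the product *)
pose G (j : 'I_n) (c : bool) : R := if j == i then (c == b)%:R * sel c else sel c.
have weight_ind r : weight x y r * (r i == b)%:R = \prod_j G j (r j).
  rewrite /weight (bigD1 i) //= [RHS](bigD1 i) //= /G eqxx mulrAC.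
  by congr (_ * _); [exact: mulrC | apply: eq_bigr => j /negbTE ->].
under eq_bigr => r _ do rewrite weight_ind.
rewrite -(bigA_distr_bigA G) (bigD1 i) //= big_bool /G eqxx.
rewrite (eq_bigr (fun _ => x + y)) => [|j /negbTE ->]; last by rewrite big_bool.
rewrite prodr_const cardC1 card_ord; congr (_ * _).
by case: (b); rewrite /= mul1r mul0r ?addr0 ?add0r.
Qed.

Lemma sum_weight_cnt x y :
  \sum_r weight x y r * (cnt r n)%:R = n%:R * x * (x + y) ^+ n.-1.
Proof.
rewrite -(sum_weight_count x y true); apply: eq_bigr => r _.
by rewrite cnt_card; congr (_ * _%:R); apply: eq_card => i; rewrite !inE eqb_id.
Qed.

Lemma sum_weight_cntc x y :
  \sum_r weight x y r * (cntc r n)%:R = n%:R * y * (x + y) ^+ n.-1.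
Proof.
rewrite -(sum_weight_count x y false); apply: eq_bigr => r _.
by rewrite cntc_card; congr (_ * _%:R); apply: eq_card => i; rewrite !inE eqbF_neg.
Qed.

End Weight.

Section Entropy.
Context {R : realType}.
Implicit Types (p u : R).

Definition bin_entropy p : R := - p * ln p - (1 - p) * ln (1 - p).

Definition cross_entropy (b1 b2 : R) p : R := - p * ln b1 - (1 - p) * ln b2.

Definition entropy_gap (b1 b2 : R) p : R := bin_entropy p - cross_entropy b1 b2 p.

Lemma ln_le_subr1 (x : R) : 0 < x -> ln x <= x - 1.
Proof. by move=> x0; rewrite -[in ln x](subrKC 1 x) le_ln1Dx //; lra. Qed.

Lemma ln_mulXn (a b : R) m l : 0 < a -> 0 < b ->
  ln (a ^+ m * b ^+ l) = m%:R * ln a + l%:R * ln b.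
Proof.
by move=> a0 b0; rewrite lnM ?posrE ?exprn_gt0 // !lnXn // !mulr_natl.
Qed.

Lemma cross_entropy_gt0 (b1 b2 : R) p : 0 < b1 < 1 -> 0 < b2 < 1 -> 0 < p < 1 ->
  0 < cross_entropy b1 b2 p.
Proof.
move=> b1_01 b2_01 /andP[p0 p1]; rewrite /cross_entropy !mulNr -!mulrN.
by apply: addr_gt0; apply: mulr_gt0; rewrite ?subr_gt0 ?oppr_gt0 ?ln_lt0.
Qed.

Lemma SD_gt1 (b1 b2 : R) p : 0 < b1 < 1 -> 0 < b2 < 1 -> 0 < p < 1 ->
  0 < entropy_gap b1 b2 p -> 1 < SD p b1 b2.
Proof.
move=> b1_01 b2_01 p01; rewrite /entropy_gap subr_gt0 => gap.
by rewrite /SD ltr_pdivlMr ?mul1r //; apply: cross_entropy_gt0.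
Qed.

Lemma entropy_gap_mode (b1 b2 : R) : 0 < b1 -> 0 < b2 ->
  entropy_gap b1 b2 (b1 / (b1 + b2)) = ln (b1 + b2).
Proof.
move=> b1_0 b2_0; have c0 : 0 < b1 + b2 by rewrite addr_gt0.
rewrite /entropy_gap /bin_entropy /cross_entropy.
have -> : 1 - b1 / (b1 + b2) = b2 / (b1 + b2) by field; rewrite gt_eqF.
by rewrite !ln_div ?posrE //; field; rewrite gt_eqF.
Qed.

Lemma bin_entropy_sqr_le u : 0 < u < 1 -> bin_entropy (u ^+ 2) <= 3 * u.
Proof.
move=> /andP[u0 u1]; set e := u ^+ 2.
have e_le_u : e <= u by rewrite /e expr2 ger_pMl // ltW.
have e1 : 0 < 1 - e by rewrite subr_gt0 /e expr2; nra.
have lnu : - ln u <= u^-1 - 1 by rewrite -lnV ?posrE // ln_le_subr1 ?invr_gt0.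
have ln1e : - ln (1 - e) <= (1 - e)^-1 - 1
  by rewrite -lnV ?posrE // ln_le_subr1 ?invr_gt0.
have head : - e * ln e <= 2 * u.
  have : u * (- ln u) <= u * (u^-1 - 1) by rewrite ler_pM2l.
  rewrite mulrBr mulfV ?gt_eqF // /e lnXn // mulr2n => ulnu.
  nra.
have tail : - (1 - e) * ln (1 - e) <= e.
  have : (1 - e) * (- ln (1 - e)) <= (1 - e) * ((1 - e)^-1 - 1) by rewrite ler_pM2l.
  by rewrite mulrBr mulfV ?gt_eqF // mulNr mulrN; lra.
rewrite /bin_entropy; lra.
Qed.

Lemma entropy_gap_lt0_near0 (b1 b2 : R) q : 0 < b1 < 1 -> 0 < b2 < 1 -> 0 < q ->
  exists2 e, 0 < e < q & entropy_gap b1 b2 e < 0.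
Proof.
move=> /andP[b1_0 b1_1] b2_01 q0.
have lnb1 : ln b1 < 0 by rewrite ln_lt0 // b1_0.
have lnb2 : ln b2 < 0 by rewrite ln_lt0.
(* with [u <= - ln b2 / 8], the bound [3 u] on the entropy is beaten by [(3/4) ln b2] *)
set u := Num.min (1 / 2) (Num.min q (- ln b2 / 8)).
have u0 : 0 < u by rewrite !lt_min q0 /=; apply/andP; split; lra.
have [u_half u_q u_lnb2] : [/\ u <= 1 / 2, u <= q & u <= - ln b2 / 8].
  by split; rewrite !ge_min lexx ?orbT.
have uu_q : u ^+ 2 < q by rewrite expr2; nra.
exists (u ^+ 2); first by rewrite exprn_gt0.
have H : bin_entropy (u ^+ 2) <= 3 * u by apply: bin_entropy_sqr_le; rewrite u0 /=; lra.
have e_quarter : u ^+ 2 <= 1 / 4 by rewrite expr2; nra.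
have gap_b1 : u ^+ 2 * ln b1 <= 0 by rewrite pmulr_rle0 ?exprn_gt0 // ltW.
have gap_b2 : (1 - u ^+ 2) * ln b2 <= 3 / 4 * ln b2 by nra.
rewrite /entropy_gap /cross_entropy; lra.
Qed.

Lemma entropy_gap_continuous (b1 b2 : R) p : 0 < p < 1 ->
  {for p, continuous (entropy_gap b1 b2)}.
Proof.
move=> /andP[p0 p1].
have c1m : {for p, continuous (fun x : R => 1 - x)}.
  by apply: cvgB; [exact: cvg_cst | exact: cvg_id].
have cln1m : {for p, continuous (fun x : R => ln (1 - x))}.
  by apply: continuous_comp c1m _; apply: continuous_ln; rewrite subr_gt0.
apply: cvgB; apply: cvgB.
- by apply: cvgM; [apply: cvgN; exact: cvg_id | exact: continuous_ln].
- exact: cvgM c1m cln1m.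
- by apply: cvgM; [apply: cvgN; exact: cvg_id | exact: cvg_cst].
- by apply: cvgM; [exact: c1m | exact: cvg_cst].
Qed.

End Entropy.

Section SDhat.
Context {R : realType} {n : nat}.
Implicit Types (p a b : R) (r s t : {ffun 'I_n -> bool}).

Lemma wt_weight p r : wt p r = weight p (1 - p) r.
Proof. by rewrite weightE. Qed.

Lemma wt_gt0 p r : 0 < p < 1 -> 0 < wt p r.
Proof. by case/andP=> p0 p1; rewrite /wt mulr_gt0 // exprn_gt0 // subr_gt0. Qed.

Lemma wt_continuous p r : {for p, continuous (fun x : R => wt x r)}.
Proof.
apply: cvgM; first exact: exprn_continuous.
apply: (@continuous_comp _ _ _ (fun x : R => 1 - x) (fun x => x ^+ cntc r n)).
  by apply: cvgB; [exact: cvg_cst | exact: cvg_id].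
exact: exprn_continuous.
Qed.

Lemma exists_small_entropy_gap s (b1 b2 e q : R) : (0 < n)%N ->
  0 < e -> e <= q -> q < 1 -> entropy_gap b1 b2 e < 0 -> 0 < entropy_gap b1 b2 q ->
  exists2 p, 0 < p < 1 & 0 < n%:R * entropy_gap b1 b2 p < 2 * wt p s * ln 2.
Proof.
move=> n0 e0 e_q q1 gap_e gap_q.
have n0R : (0 : R) < n%:R by rewrite ltr0n.
have ln2 : 0 < ln (2 : R) by rewrite ln_gt0 // ltr1n.
have in01 x : x \in `[e, q] -> 0 < x < 1.
  by rewrite in_itv /= => /andP[ex xq]; apply/andP; split; lra.
have [p /in01 p01 gap] : exists2 p, p \in `[e, q] &
    0 < n%:R * entropy_gap b1 b2 p < 2 * wt p s * ln 2.
  apply: (@IVT_between R (fun x => n%:R * entropy_gap b1 b2 x)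
                         (fun x => 2 * wt x s * ln 2)) => //.
  - move=> x /in01 x01; apply: cvgM; [exact: cvg_cst | exact: entropy_gap_continuous].
  - move=> x _; apply: cvgM; last exact: cvg_cst.
    by apply: cvgM; [exact: cvg_cst | exact: wt_continuous].
  - by move=> x /in01 x01; rewrite mulr_gt0 // mulr_gt0 ?wt_gt0.
  - by rewrite pmulr_rlt0.
  - by rewrite pmulr_rgt0.
by exists p.
Qed.

Lemma sum_wt_cnt_cntc p a b :
  \sum_(r : {ffun 'I_n -> bool}) wt p r * ((cnt r n)%:R * a + (cntc r n)%:R * b)
  = n%:R * (p * a + (1 - p) * b).
Proof.
under eq_bigr => r _ do rewrite mulrDr !mulrA wt_weight.
rewrite big_split /= -!mulr_suml sum_weight_cnt sum_weight_cntc.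
by rewrite subrKC expr1n !mulr1; ring.
Qed.

Lemma sum_wt_ln_wt p : 0 < p < 1 ->
  \sum_(r : {ffun 'I_n -> bool}) wt p r * ln (wt p r) = - (n%:R * bin_entropy p).
Proof.
case/andP=> p0 p1.
have -> : - (n%:R * bin_entropy p) = n%:R * (p * ln p + (1 - p) * ln (1 - p)).
  by rewrite /bin_entropy; ring.
rewrite -sum_wt_cnt_cntc; apply: eq_bigr => r _.
by rewrite [in ln _]/wt ln_mulXn // subr_gt0.
Qed.

Lemma sum_wt_ln_rho p (b1 b2 : R) : 0 < b1 -> 0 < b2 ->
  \sum_(r : {ffun 'I_n -> bool}) wt p r * ln (rho b1 b2 r) = - (n%:R * cross_entropy b1 b2 p).
Proof.
move=> b1_0 b2_0.
have -> : - (n%:R * cross_entropy b1 b2 p) = n%:R * (p * ln b1 + (1 - p) * ln b2).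
  by rewrite /cross_entropy; ring.
by rewrite -sum_wt_cnt_cntc; apply: eq_bigr => r _; rewrite ln_mulXn.
Qed.

Lemma SDhatE s t p (b1 b2 : R) :
  s != t -> cnt s n = cnt t n -> 0 < p < 1 -> 0 < b1 -> 0 < b2 ->
  SDhat s t p b1 b2 = (n%:R * bin_entropy p - 2 * wt p s * ln 2)
                      / (n%:R * cross_entropy b1 b2 p).
Proof.
move=> st cnt_st p01 b1_0 b2_0.
have wt_ts : wt p t = wt p s by rewrite /wt /cntc cnt_st.
have rho_ts : rho b1 b2 t = rho b1 b2 s by rewrite /rho /cntc cnt_st.
have ws0 := wt_gt0 s p01.
rewrite /SDhat !sum_except2 // sum_wt_ln_wt // sum_wt_ln_rho // wt_ts rho_ts.
have -> : wt p s + wt p s = 2 * wt p s by ring.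
by rewrite [ln (2 * _)]lnM ?posrE //; congr (_ / _); ring.
Qed.

Lemma SDhat_lt1 s t p (b1 b2 : R) : (0 < n)%N -> s != t -> cnt s n = cnt t n ->
  0 < p < 1 -> 0 < b1 < 1 -> 0 < b2 < 1 ->
  n%:R * entropy_gap b1 b2 p < 2 * wt p s * ln 2 -> SDhat s t p b1 b2 < 1.
Proof.
move=> n0 st cnt_st p01 b1_01 b2_01 gap.
have C0 := cross_entropy_gt0 b1_01 b2_01 p01.
have n0R : (0 : R) < n%:R by rewrite ltr0n.
move: b1_01 b2_01 => /andP[b1_0 _] /andP[b2_0 _].
rewrite SDhatE // ltr_pdivrMr ?mulr_gt0 // mul1r.
by move: gap; rewrite /entropy_gap mulrBr; lra.
Qed.

End SDhat.

Theorem proposition2p2 (R : realType) (n : nat) (s t : {ffun 'I_n -> bool})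
  (b1 b2 : R) :
  (3 <= n)%N -> s != t -> cnt s n = cnt t n ->
  0 < b1 < 1 -> 0 < b2 < 1 -> 1 < b1 + b2 ->
  \sum_(i < n) (sgnb (s i) * b1 ^+ cnt s i.+1 * b2 ^+ cntc s i.+1
                - sgnb (t i) * b1 ^+ cnt t i.+1 * b2 ^+ cntc t i.+1) = 0 ->
  exists p : R, 0 < p < 1 /\ SDhat s t p b1 b2 < 1 /\ 1 < SD p b1 b2.
Proof.
move=> n3 st cnt_st b1_01 b2_01 b12 _.
have n0 : (0 < n)%N by apply: leq_trans n3.
move: (b1_01) (b2_01) => /andP[b1_0 _] /andP[b2_0 _].
set p0 := b1 / (b1 + b2).
have p0_0 : 0 < p0 by rewrite divr_gt0 ?addr_gt0.
have p0_1 : p0 < 1 by rewrite ltr_pdivrMr ?addr_gt0 // mul1r ltrDl.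
have gap_p0 : 0 < entropy_gap b1 b2 p0 by rewrite entropy_gap_mode // ln_gt0.
have [e /andP[e0 e_p0] gap_e] := entropy_gap_lt0_near0 b1_01 b2_01 p0_0.
have [p p01 /andP[gap_p gap_wt]] :=
  exists_small_entropy_gap s n0 e0 (ltW e_p0) p0_1 gap_e gap_p0.
exists p; split => //; split; first exact: SDhat_lt1.
by apply: SD_gt1 => //; rewrite -(pmulr_rgt0 _ (_ : (0 : R) < n%:R)) ?ltr0n.
Qed.
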